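(* Let $E$ be an acyclic directed graph and let $G(E)$ carry a Hausdorff topology $\tau$ making it a topological semigroup. Then $(G(E),\tau)$ embeds (as a subsemigroup and topological subspace) densely into a CLP-compact topological semigroup $S$ if and only if $(G(E),\tau)$ is compact, i.e., $\tau=\tau_c$.
   Context: All spaces are Hausdorff. CLP-compact: every cover by clopen sets has a finite subcover. A directed graph $E=(E^0,E^1,r,s)$ has vertex set $E^0$, edge set $E^1$, source and range maps $s,r:E^1\to E^0$; paths are vertices (length zero) and sequences of edges $e_1\ldots e_n$ with $r(e_i)=s(e_{i+1})$; a cycle is a path $x$ of non-zero length with $s(x)=r(x)$; $E$ is acyclic if it has no cycles. The graph inverse semigroup $G(E)$ is the semigroup with zero $0$ generated by $E^0$, $E^1$, $E^{-1}=\{e^{-1}\mid e\in E^1\}$ subject to: for $a,b\in E^0$, $e,f\in E^1$: $ab=a$ if $a=b$, else $0$; $s(e)e=er(e)=e$; $e^{-1}s(e)=r(e)e^{-1}=e^{-1}$; $e^{-1}f=r(e)$ if $e=f$, else $0$. Non-zero elements are uniquely $uv^{-1}$ with $u,v$ paths, $r(u)=r(v)$. The topology $\tau_c$ on $G(E)$: non-zero elements are isolated and the neighborhoods of $0$ are the cofinite sets containing $0$. *)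

From mathcomp Require Import all_boot.
From Stdlib Require List.

Set Implicit Arguments.
Unset Strict Implicit.
Unset Printing Implicit Defensive.

Record graph := Graph {
  vtx : eqType;
  edg : eqType;
  gsrc : edg -> vtx;
  grng : edg -> vtx
}.

Section GraphInverseSemigroup.
Variable E : graph.

(* A path is a start vertex together with a (possibly empty) list of edges;
   the empty list gives the length-zero path (the vertex itself). *)
Definition pth := (vtx E * seq (edg E))%type.

Definition pvalid (p : pth) : bool :=
  if p.2 is e :: es then (gsrc e == p.1) && path (fun e f => grng e == gsrc f) e es
  else true.

Definition psrc (p : pth) : vtx E := p.1.
Definition prng (p : pth) : vtx E :=
  if p.2 is e :: es then grng (last e es) else p.1.

Definition acyclic : Prop :=
  forall p : pth, pvalid p -> p.2 <> [::] -> prng p <> psrc p.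

(* Normal forms: None = 0, Some (u, v) = u v^{-1} with r(u) = r(v). *)
Definition gwf (x : option (pth * pth)) : bool :=
  if x is Some (u, v) then [&& pvalid u, pvalid v & prng u == prng v] else true.

Definition GE := {x : option (pth * pth) | gwf x}.

Definition gzero : GE := exist _ None isT.

(* (u v^{-1})(w z^{-1}) = u p z^{-1}      if w = v p,
                         = u (z q)^{-1}    if v = w q,
                         = 0               otherwise. *)
Definition rmul (x y : option (pth * pth)) : option (pth * pth) :=
  match x, y with
  | Some (u, v), Some (w, z) =>
      if (w.1 == v.1) && prefix v.2 w.2 then
        Some ((u.1, u.2 ++ drop (size v.2) w.2), z)
      else if (v.1 == w.1) && prefix w.2 v.2 then
        Some (u, (z.1, z.2 ++ drop (size w.2) v.2))
      else None
  | _, _ => None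
  end.

(* The product of two normal forms is again a normal form, so insubd never
   falls back to its default. *)
Definition gmul (x y : GE) : GE := insubd gzero (rmul (val x) (val y)).

End GraphInverseSemigroup.

Section Topology.
Variable T : Type.
Implicit Types (O : (T -> Prop) -> Prop).

Definition is_topology O : Prop :=
  [/\ O (fun _ => True),
      (forall U V, O U -> O V -> O (fun x => U x /\ V x)) &
      (forall F : (T -> Prop) -> Prop, (forall U, F U -> O U) ->
         O (fun x => exists U, F U /\ U x))].

Definition hausdorff O : Prop :=
  forall x y : T, x <> y -> exists U V, [/\ O U, O V, U x, V y &
    forall z, U z -> V z -> False].

Definition clopen O (U : T -> Prop) : Prop := O U /\ O (fun x => ~ U x).

Definition compact O : Prop :=
  forall F : (T -> Prop) -> Prop, (forall U, F U -> O U) ->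
    (forall x, exists U, F U /\ U x) ->
    exists l : list (T -> Prop), (forall U, List.In U l -> F U) /\
      (forall x, exists U, List.In U l /\ U x).

Definition clp_compact O : Prop :=
  forall F : (T -> Prop) -> Prop, (forall U, F U -> clopen O U) ->
    (forall x, exists U, F U /\ U x) ->
    exists l : list (T -> Prop), (forall U, List.In U l -> F U) /\
      (forall x, exists U, List.In U l /\ U x).

Definition jcont O (m : T -> T -> T) : Prop :=
  forall x y (W : T -> Prop), O W -> W (m x y) ->
    exists U V, [/\ O U, O V, U x, V y & forall a b, U a -> V b -> W (m a b)].

Definition top_semigroup O (m : T -> T -> T) : Prop :=
  [/\ is_topology O, hausdorff O, associative m & jcont O m].

Definition dense O (A : T -> Prop) : Prop :=
  forall V, O V -> (exists y, V y) -> exists y, V y /\ A y.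

End Topology.

Definition top_embedding (T S : Type) (OT : (T -> Prop) -> Prop)
  (OS : (S -> Prop) -> Prop) (f : T -> S) : Prop :=
  injective f /\
  forall U : T -> Prop, OT U <-> exists V, OS V /\ forall x, U x <-> V (f x).

(* The topology tau_c on G(E): non-zero elements are isolated and the
   neighbourhoods of 0 are the cofinite sets containing 0. *)
Definition tau_c (E : graph) (U : GE E -> Prop) : Prop :=
  U (gzero E) -> exists l : list (GE E), forall x, ~ U x -> List.In x l.

From mathcomp Require Import all_boot.
From Stdlib Require List.
From Stdlib Require Import Classical FunctionalExtensionality PropExtensionality.

Set Implicit Arguments.
Unset Strict Implicit.
Unset Printing Implicit Defensive.

(* Every nonzero element of G(E) is isolated in a Hausdorff semigroup topology: near a
   vertex e only finitely many idempotents below e survive, and every other element is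
   carried to a shorter one by multiplication with an edge or an inverse edge, maps with
   finite fibres.  Hence tau is compact iff every neighbourhood of 0 is cofinite, i.e.
   tau = tau_c.
   Now let G(E) be dense in a CLP-compact S.  Then f 0 is a zero of S and the points f x,
   x <> 0, are isolated in S, so every infinite set of nonzero elements accumulates at some
   point s of S.  Evaluating products at s shows that a family of pairwise orthogonal
   idempotents converges to 0 (there s s = f 0), and that convergence passes to D from h(D)
   and the fibres of h whenever x h(x) = x on D (there s (f 0) = f 0).  By acyclicity the
   idempotents u u^-1 with a fixed range vertex are orthogonal; passing through the paths u,
   the inverse paths u^-1, the idempotents u u^-1 and finally u v^-1, which is fixed by
   u u^-1 on the left and v v^-1 on the right, all of G(E) converges to 0: tau is compact. *)

(** * Topological preliminaries *)

Section Finiteness.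
Variable T : Type.
Implicit Types A B : T -> Prop.

Definition finite_pred A := exists l : list T, forall x, A x -> List.In x l.

Lemma finite_sub A B : finite_pred B -> (forall x, A x -> B x) -> finite_pred A.
Proof. by move=> [l Hl] AB; exists l => x /AB /Hl. Qed.

Lemma finite_union A B : finite_pred A -> finite_pred B -> finite_pred (fun x => A x \/ B x).
Proof.
move=> [l1 H1] [l2 H2]; exists (l1 ++ l2)%list => x Hx; apply: List.in_or_app.
by case: Hx => [/H1|/H2]; [left | right].
Qed.

Lemma finite_subsingleton A : (forall x y, A x -> A y -> x = y) -> finite_pred A.
Proof.
move=> Auniq; case: (classic (exists x, A x)) => [[x Ax]|noA].
  by exists [:: x] => y Ay; left; exact: Auniq.
by exists nil => y Ay; apply: noA; exists y.
Qed.

Lemma finite_bigcup (I : Type) (K : list I) (A : I -> T -> Prop) :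
  (forall i, List.In i K -> finite_pred (A i)) ->
  finite_pred (fun x => exists2 i, List.In i K & A i x).
Proof.
elim: K => [|i K IH] HK; first by exists nil => x [].
have [l1 H1] := HK i (or_introl erefl).
have [l2 H2] := IH (fun j Hj => HK j (or_intror Hj)).
exists (l1 ++ l2)%list => x [j [<-|Hj] Ajx]; apply: List.in_or_app.
  by left; exact: H1.
by right; apply: H2; exists j.
Qed.

Lemma infinite_avoid A : ~ finite_pred A -> forall l, exists x, A x /\ ~ List.In x l.
Proof.
move=> Ainf l; apply: NNPP => none; apply: Ainf; exists l => x Ax.
by apply: NNPP => notin; apply: none; exists x.
Qed.

End Finiteness.

Lemma finite_image (T T' : Type) (g : T -> T') (A : T -> Prop) :
  finite_pred A -> finite_pred (fun y => exists2 x, A x & g x = y).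
Proof.
move=> [l Hl]; exists (List.map g l) => _ [x Ax <-]; exact: List.in_map (Hl x Ax).
Qed.

Lemma finite_preimage (T T' : Type) (g : T -> T') (A : T -> Prop) :
  (forall x y, A x -> A y -> g x = g y -> x = y) ->
  finite_pred (fun y => exists2 x, A x & g x = y) -> finite_pred A.
Proof.
move=> g_inj [L HL].
suff [l Hl] : exists l, forall x, A x -> List.In (g x) L -> List.In x l.
  by exists l => x Ax; apply: Hl => //; apply: HL; exists x.
elim: L {HL} => [|y L [l IH]]; first by exists nil.
case: (classic (exists2 x, A x & g x = y)) => [[x0 Ax0 gx0]|noy].
  exists (x0 :: l) => x Ax [gxy|inL]; last by right; exact: IH.
  by left; apply: g_inj => //; rewrite gx0.
exists l => x Ax [gxy|inL]; last exact: IH.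
by case: noy; exists x.
Qed.

Lemma finite_prefixes (X : eqType) (s : seq X) : finite_pred (fun t => prefix t s).
Proof.
elim: s => [|x s [l Hl]]; first by exists [:: [::]] => t; rewrite prefixs0 => /eqP ->; left.
exists ([::] :: List.map (cons x) l) => -[|y t]; first by left.
by rewrite prefix_cons => /andP [/eqP -> /Hl tl]; right; exact: List.in_map.
Qed.

Section Topology.
Variables (T : Type) (O : (T -> Prop) -> Prop).

Definition converges_to (z : T) (D : T -> Prop) :=
  forall U, O U -> U z -> finite_pred (fun x => D x /\ ~ U x).

Lemma converges_sub z (D D' : T -> Prop) :
  (forall x, D' x -> D x \/ x = z) -> converges_to z D -> converges_to z D'.
Proof.
move=> DD' Dz U OU Uz; apply: finite_sub (Dz U OU Uz) _ => x [/DD' [Dx|->] NUx] //.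
Qed.

Lemma converges_of_finite z (D : T -> Prop) : finite_pred D -> converges_to z D.
Proof. by move=> Dfin U _ _; apply: finite_sub Dfin _ => x []. Qed.

Lemma open_ext U V : O U -> (forall x, U x <-> V x) -> O V.
Proof.
move=> OU UV; suff <- : U = V by [].
by apply: functional_extensionality => x; apply: propositional_extensionality.
Qed.

Lemma finite_outside_cover (C : T -> Prop) (L : list (T -> Prop)) :
  (forall V, List.In V L -> V = C \/ exists a, V = (fun t => t = a)) ->
  (forall x, exists V, List.In V L /\ V x) -> finite_pred (fun x => ~ C x).
Proof.
move=> HL Lcov.
suff [l Hl] : exists l, forall x, (exists V, List.In V L /\ V x) -> ~ C x -> List.In x l.
  by exists l => x NCx; exact: Hl _ (Lcov x) NCx.
elim: L HL {Lcov} => [|V L IH] HL; first by exists nil => x [V [[]]].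
have [l Hl] := IH (fun W HW => HL W (or_intror HW)).
have lL x W : List.In W L -> W x -> ~ C x -> List.In x l.
  by move=> LW Wx; apply: Hl; exists W.
case: (HL V (or_introl erefl)) => [->|[a ->]].
  by exists l => x [W [[<-|LW] Wx]] NCx //; exact: lL LW Wx NCx.
exists (a :: l) => x [W [[<-|LW] Wx]] NCx; first by left.
by right; exact: lL LW Wx NCx.
Qed.

Lemma compact_of_converges z : converges_to z (fun _ => True) -> compact O.
Proof.
move=> Hz F FO Fcov.
have [U0 [FU0 U0z]] := Fcov z.
have [l Hl] := Hz U0 (FO _ FU0) U0z.
suff [L [LF Lcov]] : exists L, (forall U, List.In U L -> F U) /\
    forall x, List.In x l -> exists U, List.In U L /\ U x.
  exists (U0 :: L); split; first by move=> U [<-|/LF].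
  move=> x; case: (classic (U0 x)) => [U0x|NU0x]; first by exists U0; split => //; left.
  by have [U [LU Ux]] := Lcov x (Hl x (conj I NU0x)); exists U; split => //; right.
elim: l {Hl} => [|x l [L [LF Lcov]]]; first by exists nil.
have [U [FU Ux]] := Fcov x.
exists (U :: L); split; first by move=> V [<-|/LF].
move=> y [<-|/Lcov [V [LV Vy]]]; first by exists U; split => //; left.
by exists V; split => //; right.
Qed.

Lemma converges_of_compact z : compact O -> (forall x, x <> z -> O (fun y => y = x)) ->
  converges_to z (fun _ => True).
Proof.
move=> Ocomp z_iso U OU Uz.
pose F V := V = U \/ exists2 a, ~ U a & V = (fun t => t = a).
have [L [LF Lcov]] : exists L, (forall V, List.In V L -> F V) /\
    forall x, exists V, List.In V L /\ V x.
  apply: Ocomp => [V [->|[a NUa ->]] //|x]; first by apply: z_iso => az; rewrite az in NUa.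
  case: (classic (U x)) => [Ux|NUx]; first by exists U; split => //; left.
  by exists (fun t => t = x); split => //; right; exists x.
apply: finite_sub (finite_outside_cover (C := U) _ Lcov) _ => [V /LF [->|[a _ ->]]|x []//].
  by left.
by right; exists a.
Qed.

Hypothesis O_top : is_topology O.

Lemma open_true : O (fun _ => True).
Proof. by case: O_top. Qed.

Lemma open_inter U V : O U -> O V -> O (fun x => U x /\ V x).
Proof. by case: O_top => _ OI _; exact: OI. Qed.

Lemma open_local (A : T -> Prop) :
  (forall x, A x -> exists U, [/\ O U, U x & forall y, U y -> A y]) -> O A.
Proof.
move=> Aloc; case: O_top => _ _ Ounion.
apply: (open_ext (Ounion (fun U => O U /\ forall y, U y -> A y) (fun U HU => HU.1))).
move=> x; split; first by move=> [U [[_ UA] Ux]]; exact: UA.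
by move=> /Aloc [U [OU Ux UA]]; exists U.
Qed.

Lemma open_of_isolated (A : T -> Prop) : (forall x, A x -> O (fun y => y = x)) -> O A.
Proof.
move=> Aiso; apply: open_local => x Ax.
by exists (fun y => y = x); split => [|//|y ->//]; exact: Aiso.
Qed.

Hypothesis O_haus : hausdorff O.

Lemma nbhds_eq a b : (forall N, O N -> N a -> N b) -> a = b.
Proof.
move=> ab; apply: NNPP => /O_haus [U [V [OU OV Ua Vb UV]]].
exact: UV b (ab U OU Ua) Vb.
Qed.

Lemma open_neq a : O (fun x => x <> a).
Proof.
apply: open_local => x /O_haus [U [V [OU OV Ux Va UV]]].
by exists U; split => // y Uy ya; rewrite ya in Uy; exact: UV a Uy Va.
Qed.

Lemma open_avoid (l : list T) (P : T -> Prop) :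
  O (fun x => forall y, List.In y l -> P y -> x <> y).
Proof.
elim: l => [|a l IH]; first by apply: open_ext open_true _.
case: (classic (P a)) => [Pa|NPa].
  apply: open_ext (open_inter IH (open_neq a)) _ => x; split.
    by move=> [xl xa] y [<-|ly] Py //; exact: xl.
  by move=> xal; split => [y ly|]; apply: xal => //; [right | left].
apply: open_ext IH _ => x; split; last by move=> xal y ly; apply: xal; right.
by move=> xl y [<-|ly] Py //; exact: xl.
Qed.

Lemma isolated_of_finite_nbhd x (N : T -> Prop) :
  O N -> N x -> finite_pred N -> O (fun y => y = x).
Proof.
move=> ON Nx [l Hl].
apply: open_ext (open_inter ON (open_avoid l (fun y => y <> x))) _ => y; split.
  by move=> [Ny yl]; apply: NNPP => yx; exact: yl y (Hl y Ny) yx erefl.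
by move=> ->; split => // z _ zx xz; apply: zx.
Qed.

Lemma isolated_of_finite_fiber (g : T -> T) x :
  (forall W, O W -> O (fun y => W (g y))) -> O (fun y => y = g x) ->
  finite_pred (fun y => g y = g x) -> O (fun y => y = x).
Proof. by move=> g_cont Ogx; apply: isolated_of_finite_nbhd (g_cont _ Ogx) _. Qed.

Lemma open_of_cofinite_at z U : (forall x, x <> z -> O (fun y => y = x)) ->
  (U z -> finite_pred (fun x => ~ U x)) -> O U.
Proof.
move=> z_iso Ucof; case: (classic (U z)) => [/Ucof [l Hl]|NUz].
  apply: open_ext (open_avoid l (fun y => ~ U y)) _ => x; split.
    by move=> xl; apply: NNPP => NUx; exact: xl x (Hl x NUx) NUx erefl.
  by move=> Ux y _ NUy xy; rewrite xy in Ux.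
by apply: open_of_isolated => x Ux; apply: z_iso => xz; rewrite xz in Ux.
Qed.

Lemma finite_of_clopen_discrete (A : T -> Prop) : clp_compact O ->
  (forall a, A a -> O (fun t => t = a)) -> O (fun t => ~ A t) -> finite_pred A.
Proof.
move=> Oclp Aiso ONA.
pose F V := V = (fun t => ~ A t) \/ exists2 a, A a & V = (fun t => t = a).
have [L [LF Lcov]] : exists L, (forall V, List.In V L -> F V) /\
    forall x, exists V, List.In V L /\ V x.
  apply: Oclp => [V [->|[a Aa ->]]|x].
  - split => //; apply: open_ext (open_of_isolated Aiso) _ => t.
    by split => [At|/NNPP].
  - by split; [exact: Aiso | exact: open_neq].
  - case: (classic (A x)) => Ax; last by exists (fun t => ~ A t); split => //; left.
    by exists (fun t => t = x); split => //; right; exists x.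
apply: finite_sub (finite_outside_cover (C := fun t => ~ A t) _ Lcov) _.
  by move=> V /LF [->|[a _ ->]]; [left | right; exists a].
by move=> x Ax.
Qed.

End Topology.

Section ContinuousProduct.
Variables (T : Type) (O : (T -> Prop) -> Prop) (m : T -> T -> T).
Hypotheses (O_top : is_topology O) (m_cont : jcont O m).

Lemma open_preim_mull a W : O W -> O (fun t => W (m a t)).
Proof.
move=> OW; apply: (open_local O_top) => t /= /(m_cont OW) [U [V [_ OV Ua Vt UV]]].
by exists V; split => // y /(UV _ _ Ua).
Qed.

Lemma open_preim_mulr a W : O W -> O (fun t => W (m t a)).
Proof.
move=> OW; apply: (open_local O_top) => t /= /(m_cont OW) [U [V [OU _ Ut Va UV]]].
by exists U; split => // y /UV; apply.
Qed.

Lemma open_preim_sqr W : O W -> O (fun t => W (m t t)).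
Proof.
move=> OW; apply: (open_local O_top) => t /= /(m_cont OW) [U [V [OU OV Ut Vt UV]]].
by exists (fun y => U y /\ V y); split => [||y []]; [exact: open_inter | | exact: UV].
Qed.

End ContinuousProduct.

Lemma jcont_flip (T : Type) (O : (T -> Prop) -> Prop) (m : T -> T -> T) :
  jcont O m -> jcont O (fun a b => m b a).
Proof.
move=> m_cont x y W OW /(m_cont _ _ _ OW) [U [V [OU OV Uy Vx UV]]].
by exists V, U; split => // a b Va Ub; exact: UV.
Qed.

Lemma converges_of_mul_decomposition (T : Type) (tau : (T -> Prop) -> Prop)
    (mul : T -> T -> T) (z : T) (D : T -> Prop) (g h : T -> T) :
  right_zero z mul -> jcont tau mul ->
  (forall x, D x -> mul (g x) (h x) = x) ->
  (forall x y, D x -> D y -> g x = g y -> x = y) ->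
  (forall x y, D x -> D y -> h x = h y -> x = y) ->
  converges_to tau z (fun y => exists2 x, D x & g x = y) ->
  converges_to tau z (fun y => exists2 x, D x & h x = y) ->
  converges_to tau z D.
Proof.
move=> z_zero mul_cont Dgh g_inj h_inj g_conv h_conv U OU Uz.
have outside_finite (k : T -> T) W : (forall x y, D x -> D y -> k x = k y -> x = y) ->
    converges_to tau z (fun y => exists2 x, D x & k x = y) -> tau W -> W z ->
    finite_pred (fun x => D x /\ ~ W (k x)).
  move=> k_inj k_conv OW Wz; apply: (finite_preimage (g := k)) => [x y [Dx _] [Dy _]|].
    exact: k_inj.
  by apply: finite_sub (k_conv W OW Wz) _ => _ [x [Dx NWx] <-]; split => //; exists x.
have Uzz : U (mul z z) by rewrite z_zero.
have [A [B [OA OB Az Bz AB]]] := mul_cont _ _ _ OU Uzz.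
apply: finite_sub (finite_union (outside_finite g A g_inj g_conv OA Az)
                                (outside_finite h B h_inj h_conv OB Bz)) _.
move=> x [Dx NUx]; case: (classic (A (g x))) => [Agx|]; last by left.
case: (classic (B (h x))) => [Bhx|]; last by right.
by case: NUx; rewrite -(Dgh x Dx); exact: AB.
Qed.

(** * Dense embeddings into CLP-compact semigroups *)

Section DenseEmbedding.
Variables (T : Type) (tau : (T -> Prop) -> Prop) (mul : T -> T -> T) (z : T).
Variables (S : Type) (tauS : (S -> Prop) -> Prop) (m : S -> S -> S) (f : T -> S).
Hypothesis z_right_zero : right_zero z mul.
Hypothesis T_isolated : forall x, x <> z -> tau (fun y => y = x).
Hypotheses (S_top : is_topology tauS) (S_haus : hausdorff tauS).
Hypotheses (m_cont : jcont tauS m) (S_clp : clp_compact tauS).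
Hypothesis f_mul : forall x y, f (mul x y) = m (f x) (f y).
Hypothesis f_emb : top_embedding tau tauS f.
Hypothesis f_dense : dense tauS (fun s => exists x, f x = s).

Lemma open_preim_f V : tauS V -> tau (fun x => V (f x)).
Proof. by move=> OV; apply/(proj2 f_emb); exists V. Qed.

Lemma open_image_f U : tau U -> exists V, tauS V /\ forall x, U x <-> V (f x).
Proof. exact: (proj1 (proj2 f_emb U)). Qed.

Lemma f_isolated x : x <> z -> tauS (fun t => t = f x).
Proof.
move=> /T_isolated /open_image_f [V [OV HV]].
apply: (open_ext OV) => t /=; split => [Vt|->]; last exact/HV.
apply: (nbhds_eq S_haus) => N ON Nt.
have [s [[Ns Vs] [y ys]]] := f_dense (open_inter S_top ON OV) (ex_intro _ t (conj Nt Vt)).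
by move: Ns Vs; rewrite -ys => Ny /HV <-.
Qed.

Lemma f_zero_absorbing t : m t (f z) = f z.
Proof.
apply: (nbhds_eq S_haus) => N ON Nt.
have ON' := open_preim_mulr S_top m_cont (f z) ON.
have [s [Ns [y ys]]] := f_dense ON' (ex_intro _ t Nt).
by move: Ns; rewrite -ys /= -f_mul z_right_zero.
Qed.

Lemma exists_accumulation_point (D : T -> Prop) :
  (forall x, D x -> x <> z) -> ~ finite_pred D ->
  exists s, forall Q, tauS Q -> Q s -> ~ finite_pred (fun x => D x /\ Q (f x)).
Proof.
move=> D_nz D_inf; apply: NNPP => no_acc; apply: D_inf.
(* Otherwise the image of D is discrete and clopen, hence finite. *)
have Dloc s : exists Q, [/\ tauS Q, Q s & finite_pred (fun x => D x /\ Q (f x))].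
  apply: NNPP => no_nbhd; apply: no_acc; exists s => Q OQ Qs Qfin.
  by apply: no_nbhd; exists Q.
pose A t := exists2 x, D x & f x = t.
apply: (finite_preimage (g := f)) => [x y _ _|]; first exact: (proj1 f_emb).
apply: (finite_of_clopen_discrete S_top S_haus S_clp) => [_ [x Dx <-]|].
  exact: f_isolated (D_nz x Dx).
apply: (open_local S_top) => t NAt; have [Q [OQ Qt [l Hl]]] := Dloc t.
exists (fun s => Q s /\ forall y, List.In y (List.map f l) -> A y -> s <> y).
split => [||s [Qs sl] [x Dx xs]].
- exact: (open_inter S_top OQ (open_avoid S_top S_haus _ _)).
- by split => // y _ Ay ty; rewrite ty in NAt.
- apply: (sl s) => //; last by exists x.
  by rewrite -xs; apply: List.in_map; apply: Hl; rewrite xs.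
Qed.

Lemma converges_orthogonal_idempotents (D : T -> Prop) :
  (forall x, D x -> x <> z /\ mul x x = x) ->
  (forall x y, D x -> D y -> x <> y -> mul x y = z) -> converges_to tau z D.
Proof.
move=> D_idem D_orth U OU Uz; apply: NNPP => Dinf.
have U_nz x : D x /\ ~ U x -> x <> z by move=> [Dx _]; case: (D_idem x Dx).
have [s Hs] := exists_accumulation_point U_nz Dinf.
have ss_zero : m s s = f z.
  apply: (nbhds_eq S_haus) => N ON Nss.
  have [P [Q [OP OQ Ps Qs PQ]]] := m_cont ON Nss.
  have PQ_inf := Hs _ (open_inter S_top OP OQ) (conj Ps Qs).
  have [x [[[Dx _] [Px _]] _]] := infinite_avoid PQ_inf nil.
  have [y [[[Dy _] [_ Qy]] yx]] := infinite_avoid PQ_inf [:: x].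
  rewrite -(D_orth x y Dx Dy) ?f_mul; first exact: PQ.
  by move=> xy; apply: yx; left.
have [V [OV HV]] := open_image_f OU.
have Vss : V (m s s) by rewrite ss_zero; exact/HV.
have [P [Q [OP OQ Ps Qs PQ]]] := m_cont OV Vss.
have [x [[[Dx NUx] [Px Qx]] _]] :=
  infinite_avoid (Hs _ (open_inter S_top OP OQ) (conj Ps Qs)) nil.
by apply: NUx; apply/HV; rewrite -(D_idem x Dx).2 f_mul; exact: PQ.
Qed.

(* At an accumulation point s of D outside U, s (f z) = f z: near s, an x with h x near z
   has x = x (h x) in U, and the other x lie in the fibres over the finitely many values
   of h outside a neighbourhood of z. *)
Lemma converges_of_mulr_absorbing (D : T -> Prop) (h : T -> T) :
  (forall x, D x -> mul x (h x) = x) ->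
  converges_to tau z (fun y => exists2 x, D x & h x = y) ->
  (forall a, converges_to tau z (fun x => D x /\ h x = a)) ->
  converges_to tau z D.
Proof.
move=> Dh h_conv fib_conv U OU Uz; apply: NNPP => Dinf.
have U_nz x : D x /\ ~ U x -> x <> z by move=> [_ NUx] xz; apply: NUx; rewrite xz.
have [s Hs] := exists_accumulation_point U_nz Dinf.
have [V [OV HV]] := open_image_f OU.
have Vsz : V (m s (f z)) by rewrite f_zero_absorbing; exact/HV.
have [Q [R [OQ OR Qs Rz QR]]] := m_cont OV Vsz.
have [K HK] := h_conv _ (open_preim_f OR) Rz.
have [l Hl] := finite_bigcup (fun a _ => fib_conv a U OU Uz) (K := K).
have [x [[[Dx NUx] Qx] xl]] := infinite_avoid (Hs Q OQ Qs) l.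
case: (classic (R (f (h x)))) => [Rhx|NRhx].
  by apply: NUx; apply/HV; rewrite -(Dh x Dx) f_mul; exact: QR.
apply: xl; apply: Hl; exists (h x) => //.
by apply: HK; split => //; exists x.
Qed.

End DenseEmbedding.

(** * Normal forms in G(E) *)

Section NormalForms.
Variable E : graph.
Implicit Types (a b : vtx E) (s t : seq (edg E)) (u v : pth E) (x y : GE E).

Fixpoint path_from a s : bool :=
  if s is e :: es then (gsrc e == a) && path_from (grng e) es else true.

Definition path_end a s : vtx E := last a (map (@grng E) s).

Lemma path_edgesE e es :
  path (fun e f => grng e == gsrc f) e es = path_from (grng e) es.
Proof. by elim: es e => [|f fs IH] e //=; rewrite IH eq_sym. Qed.

Lemma pvalidE u : pvalid u = path_from u.1 u.2.
Proof. by case: u => a [|e es] //; rewrite /pvalid /= path_edgesE. Qed.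

Lemma prngE u : prng u = path_end u.1 u.2.
Proof. by case: u => a [|e es] //; rewrite /prng /path_end /= last_map. Qed.

Lemma path_from_cat a s t :
  path_from a (s ++ t) = path_from a s && path_from (path_end a s) t.
Proof. by elim: s a => [|e s IH] a //=; rewrite IH andbA. Qed.

Lemma path_end_cat a s t : path_end a (s ++ t) = path_end (path_end a s) t.
Proof. by rewrite /path_end map_cat last_cat. Qed.

Lemma gwfE u v : gwf (Some (u, v)) =
  [&& path_from u.1 u.2, path_from v.1 v.2 & path_end u.1 u.2 == path_end v.1 v.2].
Proof. by rewrite /gwf !pvalidE !prngE. Qed.

Lemma rmul_wf (p q : option (pth E * pth E)) : gwf p -> gwf q -> gwf (rmul p q).
Proof.
case: p => [[[a s] [b t]]|] //; case: q => [[[c r] [d w]]|] //.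
rewrite !gwfE /= => /and3P [Ps Pt /eqP st] /and3P [Pr Pw /eqP rw].
case: ifP => [/andP [/eqP cb /prefixP [r' rr']]|_].
  move: Pr rw; rewrite rr' drop_size_cat // cb path_from_cat path_end_cat.
  move=> /andP [_ Pr'] rw.
  by rewrite gwfE /= path_from_cat Ps Pw st Pr' path_end_cat st rw eqxx.
case: ifP => [/andP [/eqP bc /prefixP [t' tt']]|_] //.
move: Pt st; rewrite tt' drop_size_cat // bc path_from_cat path_end_cat.
move=> /andP [_ Pt'] st.
by rewrite gwfE /= path_from_cat Pw Ps -rw Pt' path_end_cat -rw st eqxx.
Qed.

Definition mkGE (p : option (pth E * pth E)) : GE E := insubd (gzero E) p.

Lemma val_mkGE p : gwf p -> val (mkGE p) = p.
Proof. by move=> wf_p; rewrite /mkGE insubdK. Qed.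

Lemma val_gmul x y : val (gmul x y) = rmul (val x) (val y).
Proof. by apply: val_mkGE; apply: rmul_wf; exact: valP. Qed.

Lemma gmulx0 : right_zero (gzero E) (@gmul E).
Proof. by move=> x; apply: val_inj; rewrite val_gmul /=; case: (val x) => [[]|]. Qed.

Lemma gmul0x : left_zero (gzero E) (@gmul E).
Proof. by move=> x; apply: val_inj; rewrite val_gmul. Qed.

Lemma val_eq0 x : (val x = None) = (x = gzero E).
Proof.
apply: propositional_extensionality; split => [x0|-> //].
by apply: val_inj; rewrite x0.
Qed.

Lemma gwf_parts x u v : val x = Some (u, v) ->
  [/\ pvalid u, pvalid v & prng u = prng v].
Proof. by move=> xuv; have := valP x; rewrite xuv => /and3P [? ? /eqP]. Qed.

Definition vertex a : GE E := mkGE (Some ((a, [::]), (a, [::]))).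
Definition edge e : GE E := mkGE (Some ((gsrc e, [:: e]), (grng e, [::]))).
Definition edge_inv e : GE E := mkGE (Some ((grng e, [::]), (gsrc e, [:: e]))).

Lemma val_vertex a : val (vertex a) = Some ((a, [::]), (a, [::])).
Proof. by apply: val_mkGE; rewrite gwfE /= eqxx. Qed.

Lemma val_edge e : val (edge e) = Some ((gsrc e, [:: e]), (grng e, [::])).
Proof. by apply: val_mkGE; rewrite gwfE /= !eqxx. Qed.

Lemma val_edge_inv e : val (edge_inv e) = Some ((grng e, [::]), (gsrc e, [:: e])).
Proof. by apply: val_mkGE; rewrite gwfE /= !eqxx. Qed.

Lemma vertex_neq0 a : vertex a <> gzero E.
Proof. by rewrite -val_eq0 val_vertex. Qed.

Lemma vertex_inj : injective vertex.
Proof. by move=> a b /(congr1 val); rewrite !val_vertex => -[]. Qed.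

(* For x = u v^-1: left_unit x = u u^-1, right_unit x = v v^-1, left_vertex x = s(u),
   right_vertex x = s(v), path_part x = u and copath_part x = v^-1; all vanish at 0. *)
Definition left_unit x := if val x is Some (u, _) then mkGE (Some (u, u)) else gzero E.
Definition right_unit x := if val x is Some (_, v) then mkGE (Some (v, v)) else gzero E.
Definition left_vertex x := if val x is Some (u, _) then vertex u.1 else gzero E.
Definition right_vertex x := if val x is Some (_, v) then vertex v.1 else gzero E.
Definition path_part x :=
  if val x is Some (u, _) then mkGE (Some (u, (prng u, [::]))) else gzero E.
Definition copath_part x :=
  if val x is Some (_, v) then mkGE (Some ((prng v, [::]), v)) else gzero E.

Definition is_vertex x := exists a, x = vertex a.
Definition diagonal x := exists u, val x = Some (u, u).
Definition is_path x := exists u, val x = Some (u, (prng u, [::])).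
Definition is_copath x := exists v, val x = Some ((prng v, [::]), v).

Lemma val_diag x u v : val x = Some (u, v) -> val (mkGE (Some (u, u))) = Some (u, u).
Proof. by case/gwf_parts => pu _ _; apply: val_mkGE; rewrite /gwf pu eqxx. Qed.

Lemma val_left_unit x u v : val x = Some (u, v) -> val (left_unit x) = Some (u, u).
Proof. by rewrite /left_unit => xuv; rewrite xuv; exact: val_diag xuv. Qed.

Lemma val_right_unit x u v : val x = Some (u, v) -> val (right_unit x) = Some (v, v).
Proof.
rewrite /right_unit => xuv; rewrite xuv; apply: val_mkGE.
by case/gwf_parts: xuv => _ pv _; rewrite /gwf pv eqxx.
Qed.

Lemma val_path_part x u v :
  val x = Some (u, v) -> val (path_part x) = Some (u, (prng u, [::])).
Proof.
rewrite /path_part => xuv; rewrite xuv; apply: val_mkGE.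
by case/gwf_parts: xuv => pu _ _; rewrite /gwf pu eqxx.
Qed.

Lemma val_copath_part x u v :
  val x = Some (u, v) -> val (copath_part x) = Some ((prng v, [::]), v).
Proof.
rewrite /copath_part => xuv; rewrite xuv; apply: val_mkGE.
by case/gwf_parts: xuv => _ pv _; rewrite /gwf pv eqxx.
Qed.

Lemma rmul_vertex_l a u v :
  rmul (Some ((a, [::]), (a, [::]))) (Some (u, v)) = if u.1 == a then Some (u, v) else None.
Proof.
case: u => b s; rewrite /rmul /= prefix0s andbT drop0 /=.
by case: eqP => [->|/eqP ba] //; rewrite eq_sym (negbTE ba).
Qed.

Lemma rmul_vertex_r a u v :
  rmul (Some (u, v)) (Some ((a, [::]), (a, [::]))) = if v.1 == a then Some (u, v) else None.
Proof.
case: u v => b s [c [|e t]]; rewrite /rmul /=.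
  by case: eqP => [->|/eqP ca]; rewrite ?eqxx ?cats0 // eq_sym (negbTE ca).
by case: eqP => [->|/eqP ca] /=; rewrite ?eqxx // eq_sym (negbTE ca).
Qed.

Lemma rmul_diag_l u v : rmul (Some (u, u)) (Some (u, v)) = Some (u, v).
Proof. by case: u => a s; rewrite /rmul /= eqxx prefix_refl drop_size cats0. Qed.

Lemma rmul_diag_r u v : rmul (Some (u, v)) (Some (v, v)) = Some (u, v).
Proof. by case: u v => a s [b t]; rewrite /rmul /= eqxx prefix_refl drop_size cats0. Qed.

Lemma rmul_diag u w : rmul (Some (u, u)) (Some (w, w)) =
  if (w.1 == u.1) && prefix u.2 w.2 then Some (w, w)
  else if (u.1 == w.1) && prefix w.2 u.2 then Some (u, u) else None.
Proof.
case: u w => a s [b t]; rewrite /rmul /=.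
case: ifP => [/andP [/eqP -> /prefixP [t' ->]]|_]; first by rewrite drop_size_cat.
by case: ifP => [/andP [/eqP -> /prefixP [s' ->]]|_]; rewrite ?drop_size_cat.
Qed.

Lemma rmul_path_copath u v r :
  rmul (Some (u, (r, [::]))) (Some ((r, [::]), v)) = Some (u, v).
Proof. by case: u => a s; rewrite /rmul /= eqxx /= cats0. Qed.

Lemma mul_left_unit x : gmul (left_unit x) x = x.
Proof.
apply: val_inj; rewrite val_gmul /left_unit; case ex: (val x) => [[u v]|] //.
by rewrite (val_diag ex) rmul_diag_l.
Qed.

Lemma mul_right_unit x : gmul x (right_unit x) = x.
Proof.
apply: val_inj; rewrite val_gmul; case ex: (val x) => [[u v]|] //.
by rewrite (val_right_unit ex) rmul_diag_r.
Qed.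

Lemma mul_left_vertex x : gmul (left_vertex x) x = x.
Proof.
apply: val_inj; rewrite val_gmul /left_vertex; case ex: (val x) => [[u v]|] //.
by rewrite val_vertex rmul_vertex_l eqxx.
Qed.

Lemma mul_right_vertex x : gmul x (right_vertex x) = x.
Proof.
apply: val_inj; rewrite val_gmul /right_vertex; case ex: (val x) => [[u v]|] //.
by rewrite val_vertex rmul_vertex_r eqxx.
Qed.

Lemma mul_path_copath x : gmul (path_part x) (copath_part x) = x.
Proof.
apply: val_inj; rewrite val_gmul; case ex: (val x) => [[u v]|].
  have [_ _ uv] := gwf_parts ex.
  by rewrite (val_path_part ex) (val_copath_part ex) uv rmul_path_copath.
by rewrite /path_part ex.
Qed.

Lemma mul_vertex a b : gmul (vertex a) (vertex b) = if a == b then vertex a else gzero E.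
Proof.
apply: val_inj; rewrite val_gmul !val_vertex rmul_vertex_l /=.
by have [->|_] := eqVneq a b; rewrite ?val_vertex.
Qed.

Lemma left_unitP x : diagonal (left_unit x) \/ left_unit x = gzero E.
Proof.
case ex: (val x) => [[u v]|]; last by right; rewrite /left_unit ex.
by left; exists u; exact: val_left_unit ex.
Qed.

Lemma right_unitP x : diagonal (right_unit x) \/ right_unit x = gzero E.
Proof.
case ex: (val x) => [[u v]|]; last by right; rewrite /right_unit ex.
by left; exists v; exact: val_right_unit ex.
Qed.

Lemma left_vertexP x : is_vertex (left_vertex x) \/ left_vertex x = gzero E.
Proof. by rewrite /left_vertex; case: (val x) => [[u v]|]; [left; exists u.1 | right]. Qed.

Lemma right_vertexP x : is_vertex (right_vertex x) \/ right_vertex x = gzero E.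
Proof. by rewrite /right_vertex; case: (val x) => [[u v]|]; [left; exists v.1 | right]. Qed.

Lemma units_inj x y : left_unit x = left_unit y -> right_unit x = right_unit y -> x = y.
Proof.
move=> /(congr1 val) lxy /(congr1 val) rxy; apply: val_inj.
case ex: (val x) lxy rxy => [[u v]|]; case ey: (val y) => [[u' v']|];
  rewrite ?(val_left_unit ex) ?(val_left_unit ey) ?(val_right_unit ex) ?(val_right_unit ey)
    /left_unit /right_unit ?ex ?ey //.
by move=> [-> _] [-> _].
Qed.

Definition diagonal_at (a : GE E) x := exists u, val x = Some (u, u) /\ vertex (prng u) = a.

Lemma diagonal_neq0 x : diagonal x -> x <> gzero E.
Proof. by move=> [u xu]; rewrite -val_eq0 xu. Qed.

Lemma mul_diagonal x : diagonal x -> gmul x x = x.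
Proof. by move=> [u xu]; apply: val_inj; rewrite val_gmul xu rmul_diag_l. Qed.

Lemma path_part_diag x : diagonal x -> is_path (path_part x).
Proof. by move=> [u xu]; exists u; exact: val_path_part xu. Qed.

Lemma copath_part_diag x : diagonal x -> is_copath (copath_part x).
Proof. by move=> [u xu]; exists u; exact: val_copath_part xu. Qed.

Lemma path_part_inj x y : diagonal x -> diagonal y -> path_part x = path_part y -> x = y.
Proof.
move=> [u xu] [u' yu'] /(congr1 val); rewrite (val_path_part xu) (val_path_part yu').
by case=> uu' _; apply: val_inj; rewrite xu yu' uu'.
Qed.

Lemma copath_part_inj x y : diagonal x -> diagonal y -> copath_part x = copath_part y -> x = y.
Proof.
move=> [u xu] [u' yu'] /(congr1 val); rewrite (val_copath_part xu) (val_copath_part yu').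
by case=> _ uu'; apply: val_inj; rewrite xu yu' uu'.
Qed.

Lemma path_left_unit x : is_path x -> diagonal_at (right_vertex x) (left_unit x).
Proof. by move=> [u xu]; exists u; rewrite (val_left_unit xu) /right_vertex xu. Qed.

Lemma copath_right_unit x : is_copath x -> diagonal_at (left_vertex x) (right_unit x).
Proof. by move=> [v xv]; exists v; rewrite (val_right_unit xv) /left_vertex xv. Qed.

Lemma path_left_unit_inj x y : is_path x -> is_path y -> left_unit x = left_unit y -> x = y.
Proof.
move=> [u xu] [u' yu'] /(congr1 val); rewrite (val_left_unit xu) (val_left_unit yu').
by case=> uu' _; apply: val_inj; rewrite xu yu' uu'.
Qed.

Lemma copath_right_unit_inj x y :
  is_copath x -> is_copath y -> right_unit x = right_unit y -> x = y.
Proof.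
move=> [v xv] [v' yv'] /(congr1 val); rewrite (val_right_unit xv) (val_right_unit yv').
by case=> vv' _; apply: val_inj; rewrite xv yv' vv'.
Qed.

Lemma rmul_edge_inv_fiber e s (v w z : pth E) :
  rmul (Some ((grng e, [::]), (gsrc e, [:: e]))) (Some (w, z)) = Some ((grng e, s), v) ->
  (w = (gsrc e, e :: s) /\ z = v) \/ [/\ w = (gsrc e, [::]), z.1 = v.1 & rcons z.2 e = v.2].
Proof.
case: w => c [|e' p]; rewrite /rmul /=.
  rewrite andbF andbT; case: eqP => // ce [_ zv]; right.
  by rewrite -zv ce /= cats1.
rewrite prefix0s andbT drop0.
case: ifP => [/andP [/eqP ce /eqP e'e] [-> ->]|ne]; first by left; rewrite ce e'e.
case: ifP => // /and3P [/eqP ce /eqP e'e _].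
by rewrite ce e'e !eqxx in ne.
Qed.

Lemma rmul_copath_edge_fiber e a t (w z : pth E) :
  rmul (Some (w, z)) (Some ((gsrc e, [:: e]), (grng e, [::]))) =
    Some ((a, [::]), (grng e, t)) ->
  w = (a, [::]) /\ z = (gsrc e, e :: t).
Proof.
case: z => d [|e' [|e'' q]]; case: w => c p; rewrite /rmul /=.
- by rewrite andbT andbF; case: ifP => // _ [_]; case: p.
- rewrite !andbT cats0.
  case: ifP => [/andP [/eqP de /eqP e'e] [-> ->] <-|ne]; first by rewrite -de e'e.
  by case: ifP => // /andP [/eqP de /eqP e'e]; rewrite de e'e !eqxx in ne.
- rewrite !andbF andbT /=.
  by case: ifP => // /andP [/eqP de /eqP e'e] [-> ->] <-; rewrite de e'e.
Qed.

Lemma val_mul_copath_edge x a b e t : val x = Some ((a, [::]), (b, e :: t)) ->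
  val (gmul x (edge e)) = Some ((a, [::]), (grng e, t)).
Proof.
move=> ex; have := gwf_parts ex; rewrite pvalidE => -[_ /andP [/eqP eb _] _].
rewrite val_gmul ex val_edge /rmul /= eb !eqxx /=.
by case: (t) => [|? ?]; rewrite ?prefix0s ?drop0.
Qed.

Lemma copath_edge_fiber x y a b e t : val x = Some ((a, [::]), (b, e :: t)) ->
  gmul y (edge e) = gmul x (edge e) -> y = x.
Proof.
move=> ex /(congr1 val); rewrite (val_mul_copath_edge ex) val_gmul val_edge.
have := gwf_parts ex; rewrite pvalidE => -[_ /andP [/eqP eb _] _].
case ey: (val y) => [[w z]|] // /rmul_copath_edge_fiber [wa ze].
by apply: val_inj; rewrite ey ex wa ze eb.
Qed.

Lemma val_mul_edge_inv x a e s v : val x = Some ((a, e :: s), v) ->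
  val (gmul (edge_inv e) x) = Some ((grng e, s), v).
Proof.
move=> ex; have := gwf_parts ex; rewrite pvalidE => -[/andP [/eqP ea _] _ _].
by rewrite val_gmul ex val_edge_inv /rmul /= ea !eqxx /= prefix0s drop0.
Qed.

Lemma edge_inv_fiber_finite x a e s v : val x = Some ((a, e :: s), v) ->
  finite_pred (fun y => gmul (edge_inv e) y = gmul (edge_inv e) x).
Proof.
move=> ex; pose other y := exists2 w, val y = Some ((gsrc e, [::]), w) &
  w.1 = v.1 /\ rcons w.2 e = v.2.
apply: finite_sub (finite_union (finite_subsingleton (A := fun y => y = x) _)
                                (finite_subsingleton (A := other) _)) _.
- by move=> ? ? -> ->.
- move=> y y' [[c w] yw [/= cv wv]] [[c' w'] yw' [/= c'v w'v]].
  apply: val_inj; rewrite yw yw' cv c'v.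
  by have -> : w = w' by apply: (@rcons_injl _ e); rewrite wv w'v.
- move=> y /(congr1 val); rewrite (val_mul_edge_inv ex) val_gmul val_edge_inv.
  case ey: (val y) => [[w z]|] // /rmul_edge_inv_fiber [[yw zv]|[yw zv ze]].
    by left; apply: val_inj; rewrite ey ex yw zv; have := gwf_parts ex;
      rewrite pvalidE => -[/andP [/eqP ->]].
  by right; exists z; rewrite ?ey ?yw.
Qed.

Lemma mul_diagonal_prefix x y u w : val x = Some (u, u) -> val y = Some (w, w) ->
  u.1 = w.1 -> gmul x y <> gzero E -> prefix u.2 w.2 \/ gmul x y = x.
Proof.
move=> xu yw uw; rewrite -val_eq0 val_gmul xu yw rmul_diag uw eqxx /=.
case: ifP => [pre _|npre]; first by left.
case: ifP => // pre' _; right; apply: val_inj.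
by rewrite val_gmul xu yw rmul_diag uw eqxx /= npre pre'.
Qed.

End NormalForms.

Section Acyclic.
Variable E : graph.
Hypothesis E_acyclic : acyclic E.
Implicit Types (a : vtx E) (s t : seq (edg E)) (u v : pth E) (x y : GE E).

Lemma acyclic_cat_nil a s t :
  path_from a (s ++ t) -> path_end a (s ++ t) = path_end a s -> t = [::].
Proof.
rewrite path_from_cat path_end_cat => /andP [_ Pt] loop.
case: t Pt loop => [|e es] // Pt loop; exfalso.
by apply: (E_acyclic (p := (path_end a s, e :: es))); rewrite ?pvalidE ?prngE.
Qed.

Lemma rmul_sq_eq u v : gwf (Some (u, v)) -> rmul (Some (u, v)) (Some (u, v)) <> None -> u = v.
Proof.
case: u v => a s [b t]; rewrite gwfE /rmul /= => /and3P [Ps Pt /eqP st].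
case: ifP => [/andP [/eqP ab /prefixP [p sp]] _|_].
  by move: Ps st; rewrite sp ab => Ps st; rewrite (acyclic_cat_nil Ps st) cats0.
case: ifP => [/andP [/eqP ba /prefixP [p tp]] _|_ //].
by move: Pt st; rewrite tp ba => Pt st; rewrite (acyclic_cat_nil Pt (esym st)) cats0.
Qed.

Lemma mul_diagonal_at (a : GE E) x y :
  diagonal_at a x -> diagonal_at a y -> x <> y -> gmul x y = gzero E.
Proof.
move=> [[b s] [xu <-]] [[c t] [yv /vertex_inj rng]] xy.
apply: val_inj; rewrite val_gmul xu yv rmul_diag /=.
have [Ps _ _] := gwf_parts xu; have [Pt _ _] := gwf_parts yv.
move: Ps Pt rng; rewrite !pvalidE !prngE /= => Ps Pt rng.
case: ifP => [/andP [/eqP cb /prefixP [p tp]]|_].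
  case: xy; apply: val_inj; rewrite xu yv.
  by move: Pt rng; rewrite cb tp => Pt rng; rewrite (acyclic_cat_nil Pt rng) cats0.
case: ifP => [/andP [/eqP bc /prefixP [p sp]]|_ //].
case: xy; apply: val_inj; rewrite xu yv.
by move: Ps rng; rewrite bc sp => Ps rng; rewrite (acyclic_cat_nil Ps (esym rng)) cats0.
Qed.

Lemma vertex_sandwich_sq a y : let s := gmul (gmul (vertex a) y) (vertex a) in
  gmul s s <> gzero E -> exists u, val y = Some (u, u) /\ u.1 = a.
Proof.
rewrite /= -val_eq0 !val_gmul val_vertex; case ey: (val y) => [[u v]|] //.
rewrite rmul_vertex_l; case: eqP => [ua|_] //; rewrite rmul_vertex_r.
case: eqP => [_|_] // sq_nz.
have wf_uv : gwf (Some (u, v)) by rewrite -ey; exact: valP.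
by exists u; rewrite ey -(rmul_sq_eq wf_uv sq_nz).
Qed.

End Acyclic.

(** * Topologies on G(E) *)

Section Isolation.
Variables (E : graph) (tau : (GE E -> Prop) -> Prop).
Hypotheses (E_acyclic : acyclic E) (tau_sg : top_semigroup tau (@gmul E)).

Let tau_top : is_topology tau. Proof. by case: tau_sg. Qed.
Let tau_haus : hausdorff tau. Proof. by case: tau_sg. Qed.
Let mul_cont : jcont tau (@gmul E). Proof. by case: tau_sg. Qed.

(* Near e = vertex a only the u u^-1 with s(u) = a remain (the square of e y e is nonzero);
   separating e from one of them, y0 = u0 u0^-1, leaves only the prefixes u of u0. *)
Lemma vertex_isolated a : tau (fun y => y = vertex a).
Proof.
set e := vertex a.
pose sq y := gmul (gmul (gmul e y) e) (gmul (gmul e y) e).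
have W1_open : tau (fun y => sq y <> gzero E).
  apply: (open_preim_mull tau_top mul_cont e
           (W := fun t => gmul (gmul t e) (gmul t e) <> gzero E)).
  apply: (open_preim_mulr tau_top mul_cont e (W := fun t => gmul t t <> gzero E)).
  exact: (open_preim_sqr tau_top mul_cont (open_neq tau_top tau_haus _)).
have e_idem : gmul e e = e by rewrite mul_vertex eqxx.
have W1e : sq e <> gzero E by rewrite /sq !e_idem; exact: vertex_neq0.
have W1_diag y : sq y <> gzero E -> exists u, val y = Some (u, u) /\ u.1 = a.
  exact: vertex_sandwich_sq.
case: (classic (exists2 y0, sq y0 <> gzero E & y0 <> e)) => [[y0 W1y0 y0e]|W1_e]; last first.
  apply: (isolated_of_finite_nbhd tau_top tau_haus W1_open W1e).
  exists [:: e] => y W1y; left; apply: NNPP => ey.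
  by apply: W1_e; exists y => //; exact: nesym.
have [u0 [y0u0 u0a]] := W1_diag y0 W1y0.
have [P [R [OP OR Pe Ry0 PR]]] := tau_haus (nesym y0e).
have ey0 : gmul e y0 = y0.
  by rewrite -[in RHS](mul_left_vertex y0) /left_vertex y0u0 u0a.
pose W2 y := sq y <> gzero E /\ P y /\ (R (gmul y y0) /\ gmul y y0 <> gzero E).
have W2_open : tau W2.
  apply: (open_inter tau_top W1_open); apply: (open_inter tau_top OP).
  apply: (open_preim_mulr tau_top mul_cont y0 (W := fun t => R t /\ t <> gzero E)).
  exact: (open_inter tau_top OR (open_neq tau_top tau_haus _)).
have W2e : W2 e by do 2!split => //; rewrite ey0; split => //; rewrite -val_eq0 y0u0.
apply: (isolated_of_finite_nbhd tau_top tau_haus W2_open W2e).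
apply: finite_sub (finite_image (fun t => mkGE (Some ((a, t), (a, t))))
                                (finite_prefixes u0.2)) _.
move=> y [/W1_diag [[b t] [yu /= ba]] [Py [Ryy0 yy0]]].
have [|pre|yy0_y] := mul_diagonal_prefix yu y0u0 _ yy0; first by rewrite /= ba u0a.
  by exists t => //; apply: val_inj; rewrite -ba (val_diag yu) yu.
by rewrite yy0_y in Ryy0; case: (PR y Py Ryy0).
Qed.

Lemma nonzero_isolated x : x <> gzero E -> tau (fun y => y = x).
Proof.
rewrite -val_eq0; case ex: (val x) => [[[a s] [b t]]|] // _.
elim: s a x ex => [|e s IHs] a x ex.
  elim: t b x ex => [|e t IHt] b x ex.
    have [_ _ ab] := gwf_parts ex; rewrite /prng /= in ab.
    have -> : x = vertex a by apply: val_inj; rewrite ex val_vertex ab.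
    exact: vertex_isolated.
  apply: (isolated_of_finite_fiber tau_top tau_haus (g := fun y => gmul y (edge e))).
  - exact: open_preim_mulr tau_top mul_cont (edge e).
  - exact: IHt _ _ (val_mul_copath_edge ex).
  - apply: finite_subsingleton => y y'.
    by move=> /(copath_edge_fiber ex) -> /(copath_edge_fiber ex) ->.
apply: (isolated_of_finite_fiber tau_top tau_haus (g := gmul (edge_inv e))).
- exact: open_preim_mull tau_top mul_cont (edge_inv e).
- exact: IHs _ _ (val_mul_edge_inv ex).
- exact: edge_inv_fiber_finite ex.
Qed.

End Isolation.

Section Embedding.
Variables (E : graph) (tau : (GE E -> Prop) -> Prop).
Variables (S : Type) (tauS : (S -> Prop) -> Prop) (m : S -> S -> S) (f : GE E -> S).
Hypotheses (E_acyclic : acyclic E) (tau_sg : top_semigroup tau (@gmul E)).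
Hypotheses (S_sg : top_semigroup tauS m) (S_clp : clp_compact tauS).
Hypothesis f_mul : forall x y, f (gmul x y) = m (f x) (f y).
Hypothesis f_emb : top_embedding tau tauS f.
Hypothesis f_dense : dense tauS (fun s => exists x, f x = s).

Let tau_iso := nonzero_isolated E_acyclic tau_sg.
Let mul_cont : jcont tau (@gmul E). Proof. by case: tau_sg. Qed.
Let S_top : is_topology tauS. Proof. by case: S_sg. Qed.
Let S_haus : hausdorff tauS. Proof. by case: S_sg. Qed.
Let m_cont : jcont tauS m. Proof. by case: S_sg. Qed.

Local Notation converges := (converges_to tau (gzero E)).

Let converges_orth :=
  converges_orthogonal_idempotents tau_iso S_top S_haus m_cont S_clp f_mul f_emb f_dense.
Let converges_mulr :=
  converges_of_mulr_absorbing (@gmulx0 E) tau_iso S_top S_haus m_cont S_clp f_mul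
    f_emb f_dense.
Let converges_mull :=
  converges_of_mulr_absorbing (mul := fun a b => gmul b a) (m := fun a b => m b a) (@gmul0x E)
    tau_iso S_top S_haus (jcont_flip m_cont) S_clp (fun x y => f_mul y x) f_emb f_dense.

Lemma vertices_converge : converges (@is_vertex E).
Proof.
apply: converges_orth => [_ [a ->]|_ _ [a ->] [b ->] ab].
  by split; [exact: vertex_neq0 | rewrite mul_vertex eqxx].
by rewrite mul_vertex; case: eqP => // eab; rewrite eab in ab.
Qed.

Lemma diagonal_at_converges a : converges (diagonal_at a).
Proof.
apply: converges_orth => [x xa|x y xa ya]; last exact: (mul_diagonal_at E_acyclic xa ya).
have dx : diagonal x by case: xa => u [xu _]; exists u.
by split; [exact: diagonal_neq0 | exact: mul_diagonal].
Qed.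

Lemma paths_converge : converges (@is_path E).
Proof.
apply: (converges_mulr (h := @right_vertex E)) => [x _||a].
- exact: mul_right_vertex.
- by apply: converges_sub vertices_converge => _ [x _ <-]; exact: right_vertexP.
apply: (converges_mull (h := @left_unit E)) => [x _||b].
- exact: mul_left_unit.
- apply: converges_sub (diagonal_at_converges a) => _ [x [px xa] <-].
  by left; rewrite -xa; exact: path_left_unit.
apply: converges_of_finite; apply: finite_subsingleton => x y [[px _] lx] [[py _] ly].
by apply: path_left_unit_inj; rewrite ?lx ?ly.
Qed.

Lemma copaths_converge : converges (@is_copath E).
Proof.
apply: (converges_mull (h := @left_vertex E)) => [x _||a].
- exact: mul_left_vertex.
- by apply: converges_sub vertices_converge => _ [x _ <-]; exact: left_vertexP.
apply: (converges_mulr (h := @right_unit E)) => [x _||b].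
- exact: mul_right_unit.
- apply: converges_sub (diagonal_at_converges a) => _ [x [cx xa] <-].
  by left; rewrite -xa; exact: copath_right_unit.
apply: converges_of_finite; apply: finite_subsingleton => x y [[cx _] rx] [[cy _] ry].
by apply: copath_right_unit_inj; rewrite ?rx ?ry.
Qed.

Lemma diagonal_converges : converges (@diagonal E).
Proof.
apply: (converges_of_mul_decomposition (g := @path_part E) (h := @copath_part E)
          (@gmulx0 E) mul_cont).
- by move=> x _; exact: mul_path_copath.
- exact: path_part_inj.
- exact: copath_part_inj.
- by apply: converges_sub paths_converge => _ [x dx <-]; left; exact: path_part_diag.
- by apply: converges_sub copaths_converge => _ [x dx <-]; left; exact: copath_part_diag.
Qed.

Lemma all_converge : converges (fun _ => True).
Proof.
apply: (converges_mulr (h := @right_unit E)) => [x _||a].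
- exact: mul_right_unit.
- by apply: converges_sub diagonal_converges => _ [x _ <-]; exact: right_unitP.
apply: (converges_mull (h := @left_unit E)) => [x _||b].
- exact: mul_left_unit.
- by apply: converges_sub diagonal_converges => _ [x _ <-]; exact: left_unitP.
apply: converges_of_finite; apply: finite_subsingleton => x y [[_ rx] lx] [[_ ry] ly].
by apply: units_inj; rewrite ?lx ?ly ?rx ?ry.
Qed.

End Embedding.

Unset Implicit Arguments.
Set Strict Implicit.

Theorem theorem4p1 (E : graph) (tau : (GE E -> Prop) -> Prop) :
  acyclic E ->
  top_semigroup tau (@gmul E) ->
  ((exists (S : Type) (tauS : (S -> Prop) -> Prop) (m : S -> S -> S)
           (f : GE E -> S),
      [/\ top_semigroup tauS m, clp_compact tauS,
          (forall x y, f (gmul x y) = m (f x) (f y)),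
          top_embedding tau tauS f &
          dense tauS (fun s => exists x, f x = s)])
   <-> compact tau)
  /\ (compact tau <-> (forall U, tau U <-> tau_c U)).
Proof.
move=> E_acyclic tau_sg.
have [tau_top tau_haus _ _] := tau_sg.
have tau_iso := nonzero_isolated E_acyclic tau_sg.
split; last split=> [tau_comp U|tau_cE].
- split=> [[S [tauS [m [f [S_sg S_clp f_mul f_emb f_dense]]]]]|tau_comp].
    exact: compact_of_converges (all_converge E_acyclic tau_sg S_sg S_clp f_mul f_emb f_dense).
  exists (GE E), tau, (@gmul E), id; split => //.
  + by move=> F F_clopen; apply: tau_comp => U /F_clopen [].
  + split => // U; split => [OU|[V [OV UV]]]; first by exists U.
    by apply: (open_ext OV) => x; apply: iff_sym.
  + by move=> V _ [y Vy]; exists y; split => //; exists y.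
- split=> [OU Uz|]; last exact: open_of_cofinite_at tau_top tau_haus _ _ tau_iso.
  by apply: finite_sub (converges_of_compact tau_comp tau_iso OU Uz) _.
- apply: (compact_of_converges (z := gzero E)) => U /tau_cE Uc Uz.
  by apply: finite_sub (Uc Uz) _ => x [].
Qed.
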